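(* Let $n\ge 4$ and consider the 2NC-TAP instance in which $T=K_{1,n-1}$ is a star with center $r$ and leaves $w_1,\dots,w_{n-1}$ (tree edges of cost $0$), and the links are the $n-1$ unit-cost edges $w_1w_2,w_2w_3,\dots,w_{n-2}w_{n-1},w_{n-1}w_1$ forming a cycle on the leaves. Then every 2-node connected spanning subgraph of this graph has cost at least $n-2$, while the vector $\hat x$ with $\hat x_e=1$ on tree edges and $\hat x_\ell=\frac12$ on each link is a feasible solution of the set-pairs LP of cost $\frac{n-1}{2}$. Hence the integrality ratio of the set-pairs LP for the min-cost 2NCSS problem is at least $\frac{2(n-2)}{n-1}=2-\frac{2}{n-1}$.
   Context: For a graph $G=(V,E)$ with nonnegative edge costs $c$, the set-pairs LP for the min-cost 2-node connected spanning subgraph (2NCSS) problem is: minimize $\sum_{e\in E}c_ex_e$ subject to $x(\delta(S))\ge 2$ for all $\emptyset\ne S\subsetneq V$; for every node $w\in V$ and every $\emptyset\ne S\subsetneq V\setminus\{w\}$, $\sum\{x_e: e=uv\in E,\ u\in S,\ v\in (V\setminus\{w\})\setminus S\}\ge 1$; and $0\le x\le 1$. Here $\delta(S)$ is the set of edges with exactly one end node in $S$ and $x(F)=\sum_{e\in F}x_e$. The integrality ratio is the ratio of the minimum cost of a 2-node connected spanning subgraph to the LP optimum. *)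

From HB Require Import structures.
From mathcomp Require Import all_boot all_order all_algebra.
Set Implicit Arguments. Unset Strict Implicit. Unset Printing Implicit Defensive.
Import Order.TTheory GRing.Theory Num.Theory.
Local Open Scope ring_scope.

(* Graphs on a finite node type V; an edge is a 2-element subset of V. *)
Section Generic.
Variable V : finType.

Definition adjF (F : {set {set V}}) (U : {set V}) : rel V :=
  fun x y => [&& x != y, x \in U, y \in U & [set x; y] \in F].

Definition connected_on (F : {set {set V}}) (U : {set V}) : Prop :=
  forall x y, x \in U -> y \in U -> connect (adjF F U) x y.

Definition two_node_connected (F : {set {set V}}) : Prop :=
  (2 < #|V|)%N /\ connected_on F setT /\ forall w, connected_on F (~: [set w]).

Variable R : realFieldType.

Definition cost (c : {set V} -> R) (F : {set {set V}}) : R := \sum_(e in F) c e.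

Definition lp_cost (E : {set {set V}}) (c x : {set V} -> R) : R :=
  \sum_(e in E) c e * x e.

Definition setpairs_feasible (E : {set {set V}}) (x : {set V} -> R) : Prop :=
  [/\ (forall e, e \in E -> 0 <= x e <= 1),
      (forall S : {set V}, S != set0 -> S != setT ->
          2 <= \sum_(e in E | #|e :&: S| == 1%N) x e) &
      (forall (w : V) (S : {set V}), S != set0 -> S \subset ~: [set w] ->
          S != ~: [set w] ->
          1 <= \sum_(e in E | (w \notin e) && (#|e :&: S| == 1%N)) x e)].
End Generic.

(* The instance: nodes 'I_n, node 0 is the center r, nodes 1..n-1 are the
   leaves w_1..w_{n-1}. Edges: spokes r w_i, and the cycle links
   w_i w_{i+1} (1 <= i <= n-2) and w_{n-1} w_1. *)
Definition wheel_adj (n : nat) (u v : 'I_n) : bool :=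
  ((val u == 0%N) && (val v != 0%N)) ||
  [&& (0 < val u)%N, (0 < val v)%N &
      (val v == (val u).+1) || ((val u == n.-1) && (val v == 1%N))].

Definition wheelE (n : nat) : {set {set 'I_n}} :=
  [set e : {set 'I_n} | [exists u : 'I_n, exists v : 'I_n,
                          (e == [set u; v]) && wheel_adj u v]].

Definition wheel_cost (R : realFieldType) (n : nat) (e : {set 'I_n}) : R :=
  if [exists u in e, val u == 0%N] then 0 else 1.

Definition xhat (R : realFieldType) (n : nat) (e : {set 'I_n}) : R :=
  if [exists u in e, val u == 0%N] then 1 else 2^-1.

From HB Require Import structures.
From mathcomp Require Import all_boot all_order all_algebra.
From mathcomp Require Import zify ring lra.
Import Order.TTheory GRing.Theory Num.Theory.
Set Implicit Arguments. Unset Strict Implicit. Unset Printing Implicit Defensive.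
Local Open Scope ring_scope.

(* Deleting the center leaves the cycle of links, which must stay connected, so a 2-node
   connected subgraph keeps all but at most one of the n - 1 unit-cost links.  For the
   fractional point: a cut separating a leaf y from the center is crossed by the spoke at y
   and by a second spoke or by both links at y; a cut avoiding the center splits the leaf
   cycle into arcs and is crossed by two links; a cut avoiding a leaf is crossed by a spoke. *)

Lemma sumr_le_uniq (R : numDomainType) (T : finType) (P : pred T) (F : T -> R)
    (s : seq T) :
  (forall e, P e -> 0 <= F e) -> uniq s -> all P s ->
  \sum_(e <- s) F e <= \sum_(e | P e) F e.
Proof.
move=> F_ge0 uniq_s sP; rewrite big_uniq // [leRHS](bigID (mem s)) /=.
have -> : \sum_(e | P e && (e \in s)) F e = \sum_(e in s) F e.
  by apply: eq_bigl => e; apply/andP/idP => [[]//|es]; split=> //; exact: (allP sP).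
by rewrite lerDl sumr_ge0 // => e /andP [/F_ge0].
Qed.

Lemma card_pair_setI_eq1 (T : finType) (S : {set T}) (a b : T) :
  (a \in S) != (b \in S) -> #|[set a; b] :&: S| == 1%N.
Proof.
move=> aSbS; apply/cards1P.
have [aS|aS] := boolP (a \in S); [exists a | exists b]; apply/setP => x;
  rewrite !inE; apply/andP/eqP => [[/orP [] /eqP -> // xS] | ->];
  move: aSbS; rewrite ?eqxx ?orbT ?aS ?xS ?(negbTE aS) //.
- by rewrite xS in aS.
- by case: (b \in S).
Qed.

Lemma exists_change_point (P : nat -> bool) (a b : nat) :
  (a <= b)%N -> P a != P b -> exists2 u, (a <= u < b)%N & P u != P u.+1.
Proof.
elim: b => [|b IHb]; first by rewrite leqn0 => /eqP ->; rewrite eqxx.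
rewrite leq_eqVlt => /predU1P [-> | ]; first by rewrite eqxx.
rewrite ltnS => ab.
case: (boolP (P a != P b)) => [/(IHb ab) [u /andP [au ub] Pu] _ | /negPn /eqP ->].
  by exists u => //; rewrite au ltnW.
by exists b; rewrite ?ab ?leqnn.
Qed.

Section Wheel.

Variable m : nat.
Hypothesis m_ge3 : (3 <= m)%N.

Definition cycle_succ (k : nat) : nat := if k == m then 1%N else k.+1.

Lemma cycle_two_changes (P : nat -> bool) (i j : nat) :
  (1 <= i <= m)%N -> (1 <= j <= m)%N -> P i != P j ->
  exists u1 u2, [/\ (1 <= u1 <= m)%N, (1 <= u2 <= m)%N, u1 != u2,
     P u1 != P (cycle_succ u1) & P u2 != P (cycle_succ u2)].
Proof.
wlog ij : i j / (i < j)%N => [hw hi hj Pij | hi hj Pij].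
  case: (ltngtP i j) => [ij|ji|eij]; first exact: (hw i j).
  - by apply: (hw j i); rewrite // eq_sym.
  - by rewrite eij eqxx in Pij.
have succE u : (u < m)%N -> cycle_succ u = u.+1.
  by rewrite /cycle_succ; case: ifP => /eqP //; lia.
have [u1 /andP [iu1 u1j] Pu1] := exists_change_point (ltnW ij) Pij.
have {}Pu1 : P u1 != P (cycle_succ u1) by rewrite succE //; lia.
have u1_range : (1 <= u1 <= m)%N by lia.
have [Pjm | /negPn /eqP Pjm] := boolP (P j != P m).
  have [u2 /andP [ju2 u2m] Pu2] := exists_change_point (proj2 (andP hj)) Pjm.
  by exists u1, u2; split=> //; try lia; rewrite succE //; lia.
have [Pm1 | /negPn /eqP Pm1] := boolP (P m != P 1%N).
  by exists u1, m; split=> //; [lia | lia | rewrite /cycle_succ eqxx].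
have P1i : P 1%N != P i by rewrite -Pm1 -Pjm eq_sym.
have [u2 /andP [ju2 u2i] Pu2] := exists_change_point (proj1 (andP hi)) P1i.
by exists u1, u2; split=> //; try lia; rewrite succE //; lia.
Qed.

Local Notation V := 'I_m.+1.

Definition leaf_succ (i : V) : V := inord (cycle_succ i).
Definition leaf_pred (i : V) : V := inord (if i == 1%N :> nat then m else i.-1).
Definition spoke (i : V) : {set V} := [set ord0; i].
Definition link (i : V) : {set V} := [set i; leaf_succ i].
Definition leaves : {set V} := [set i : V | (0 < i)%N].

Lemma val_leaf_succ (i : V) : leaf_succ i = cycle_succ i :> nat.
Proof. by rewrite inordK // /cycle_succ; have := ltn_ord i; case: ifP => /eqP; lia. Qed.

Lemma val_leaf_pred (i : V) : (0 < i)%N ->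
  leaf_pred i = (if i == 1%N :> nat then m else i.-1) :> nat.
Proof. by move=> i_gt0; rewrite inordK //; have := ltn_ord i; case: ifP => /eqP; lia. Qed.

Lemma leaf_predK (i : V) : (0 < i)%N -> leaf_succ (leaf_pred i) = i.
Proof.
move=> i_gt0; apply/val_inj => /=; rewrite val_leaf_succ /cycle_succ val_leaf_pred //.
by have := ltn_ord i; do 2 case: ifP => /eqP; lia.
Qed.

Lemma leaf_pred_gt0 (i : V) : (0 < i)%N -> (0 < leaf_pred i)%N.
Proof. by move=> i_gt0; rewrite val_leaf_pred //; case: ifP => /eqP; lia. Qed.

Lemma leaf_succ_neq (i : V) : leaf_succ i != i.
Proof.
apply/eqP => /(congr1 (@nat_of_ord _)).
by rewrite val_leaf_succ /cycle_succ; case: ifP => /eqP; lia.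
Qed.

Lemma leaf_pred_neq (i : V) : (0 < i)%N -> leaf_pred i != i.
Proof.
move=> i_gt0; apply/eqP => /(congr1 (@nat_of_ord _)).
by rewrite val_leaf_pred //; case: ifP => /eqP; lia.
Qed.

Lemma spoke_wheelE (i : V) : (0 < i)%N -> spoke i \in wheelE m.+1.
Proof.
move=> i_gt0; rewrite inE; apply/existsP; exists ord0; apply/existsP; exists i.
by rewrite eqxx /wheel_adj /=; lia.
Qed.

Lemma link_wheelE (i : V) : (0 < i)%N -> link i \in wheelE m.+1.
Proof.
move=> i_gt0; rewrite inE; apply/existsP; exists i; apply/existsP; exists (leaf_succ i).
rewrite eqxx /wheel_adj /= val_leaf_succ /cycle_succ.
by have := ltn_ord i; case: ifP => /eqP; lia.
Qed.

Lemma wheelE_cases (e : {set V}) : e \in wheelE m.+1 ->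
  (exists2 i : V, (0 < i)%N & e = spoke i) \/
  (exists2 i : V, (0 < i)%N & e = link i).
Proof.
rewrite inE => /existsP [u /existsP [v /andP [/eqP -> ]]].
rewrite /wheel_adj /= => /orP [/andP [/eqP u0 v0] | /and3P [u_gt0 v_gt0 uv]].
  by left; exists v; [lia | rewrite /spoke (_ : u = ord0) //; exact: val_inj].
right; exists u; rewrite // /link (_ : v = leaf_succ u) //.
apply/val_inj => /=; rewrite val_leaf_succ /cycle_succ.
by have := ltn_ord v; case: ifP => /eqP; lia.
Qed.

Lemma center_notin_link (i : V) : (0 < i)%N -> ord0 \notin link i.
Proof.
move=> i_gt0; rewrite !inE; apply/norP; split; apply/eqP => /(congr1 (@nat_of_ord _)) /=.
  lia.
by rewrite val_leaf_succ /cycle_succ; case: ifP => /eqP; lia.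
Qed.

Lemma link_no_center (i : V) : (0 < i)%N -> [exists u in link i, val u == 0%N] = false.
Proof.
move=> i_gt0; apply/negbTE/existsP => [[u /andP [ui /eqP u0]]].
by move: ui; rewrite (_ : u = ord0) ?(negbTE (center_notin_link i_gt0)) //; exact: val_inj.
Qed.

Lemma spoke_center (i : V) : [exists u in spoke i, val u == 0%N].
Proof. by apply/existsP; exists ord0; rewrite !inE eqxx. Qed.

Lemma link_inj : {in leaves &, injective link}.
Proof.
move=> i j; rewrite !inE => i_gt0 j_gt0 eij; apply/val_inj => /=.
have : i \in link j by rewrite -eij !inE eqxx.
have : leaf_succ i \in link j by rewrite -eij !inE eqxx orbT.
rewrite !inE => /orP [] /eqP /(congr1 (@nat_of_ord _)) +
  /orP [] /eqP /(congr1 (@nat_of_ord _)); rewrite ?val_leaf_succ /cycle_succ //.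
all: by have := ltn_ord i; have := ltn_ord j; do 2 case: ifP => /eqP; lia.
Qed.

Lemma spoke_neq_link (i j : V) : (0 < j)%N -> spoke i != link j.
Proof.
by move=> j_gt0; apply: contraNneq (center_notin_link j_gt0) => <-; rewrite !inE eqxx.
Qed.

Lemma spoke_inj : {in leaves &, injective spoke}.
Proof.
move=> i j; rewrite inE => i_gt0 _ eij; have : i \in spoke j by rewrite -eij !inE eqxx orbT.
by rewrite !inE => /orP [/eqP /(congr1 (@nat_of_ord _)) /= | /eqP]; [lia|].
Qed.

Lemma ord_gt0 (i : V) : i != ord0 -> (0 < i)%N.
Proof. by rewrite lt0n; apply: contra => /eqP i0; apply/eqP/val_inj. Qed.

Lemma card_leaves : #|leaves| = m.
Proof.
rewrite (_ : leaves = [set~ ord0]) ?cardsC1 ?card_ord //.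
by apply/setP => i; rewrite !inE lt0n.
Qed.

Lemma cycle_succ_in_arc (a b u : nat) :
  (1 <= a)%N -> (a < b <= m)%N -> (1 <= u <= m)%N -> u != a -> u != b ->
  (a < u <= b)%N = (a < cycle_succ u <= b)%N.
Proof. by rewrite /cycle_succ; case: ifP => /eqP; lia. Qed.

(* Two missing links cut the leaf cycle into two arcs, and with the center deleted
   no edge leaves the arc between them. *)
Lemma missing_links_eq (F : {set {set V}}) (a b : V) :
  F \subset wheelE m.+1 -> connected_on F (~: [set ord0]) ->
  a \in leaves -> b \in leaves -> link a \notin F -> link b \notin F -> a = b.
Proof.
move=> sFE connF.
wlog ab : a b / (a <= b)%N => [hw|].
  by case: (leqP a b) => [|/ltnW] ab aL bL aF bF; [|symmetry]; apply: hw.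
rewrite !inE => a_gt0 b_gt0 aF bF; apply/val_inj/eqP => /=; rewrite eqn_leq ab /=.
apply/negP => ba; have {ab ba} ab : (a < b)%N by rewrite ltn_neqAle ab andbT; lia.
set C := [set x : V | (a < x <= b)%N].
have C_closed : closed (adjF F (~: [set ord0])) C.
  move=> x y /and4P [xy x0 y0 xyF].
  have [[i _ exy] | [u u_gt0 exy]] := wheelE_cases (subsetP sFE _ xyF).
    have : ord0 \in [set x; y] by rewrite exy !inE eqxx.
    by move: x0 y0; rewrite !inE => /negPf x0 /negPf y0; rewrite eq_sym x0 eq_sym y0.
  have ua : (u : nat) != a by apply: contraNneq aF => /val_inj <-; rewrite -exy.
  have ub : (u : nat) != b by apply: contraNneq bF => /val_inj <-; rewrite -exy.
  have : x \in link u by rewrite -exy !inE eqxx.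
  have : y \in link u by rewrite -exy !inE eqxx orbT.
  have u_le := ltn_ord u; have b_le := ltn_ord b.
  rewrite !inE => /orP [] /eqP -> /orP [] /eqP ->; rewrite ?eqxx // in xy;
    rewrite val_leaf_succ (cycle_succ_in_arc (u := u)) //; lia.
have bC : b \in C by rewrite inE ab leqnn.
have aC : a \notin C by rewrite inE ltnn.
have b0 : b \in ~: [set ord0] by rewrite !inE; apply/eqP => /(congr1 (@nat_of_ord _)) /=; lia.
have a0 : a \in ~: [set ord0] by rewrite !inE; apply/eqP => /(congr1 (@nat_of_ord _)) /=; lia.
by move: aC; rewrite -(closed_connect C_closed (connF b a b0 a0)) bC.
Qed.

Lemma card_missing_links_le1 (F : {set {set V}}) :
  F \subset wheelE m.+1 -> two_node_connected F ->
  (#|leaves :\: [set i | link i \in F]| <= 1)%N.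
Proof.
move=> sFE [_ [_ connF]]; apply/card_le1_eqP => i j; rewrite !inE.
move=> /andP [iF iL] /andP [jF jL]; apply: (missing_links_eq sFE (connF ord0)) => //.
all: by rewrite inE.
Qed.

Variable R : realFieldType.

Lemma wheel_cost_ge0 (e : {set V}) : 0 <= @wheel_cost R m.+1 e.
Proof. by rewrite /wheel_cost; case: ifP. Qed.

Lemma wheel_cost_link (i : V) : (0 < i)%N -> @wheel_cost R m.+1 (link i) = 1.
Proof. by move=> i_gt0; rewrite /wheel_cost link_no_center. Qed.

Lemma wheel_cost_spoke (i : V) : @wheel_cost R m.+1 (spoke i) = 0.
Proof. by rewrite /wheel_cost spoke_center. Qed.

Lemma xhat_ge0 (e : {set V}) : 0 <= @xhat R m.+1 e.
Proof. by rewrite /xhat; case: ifP; rewrite // invr_ge0 ler0n. Qed.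

Lemma xhat_spoke (i : V) : @xhat R m.+1 (spoke i) = 1.
Proof. by rewrite /xhat spoke_center. Qed.

Lemma xhat_link (i : V) : (0 < i)%N -> @xhat R m.+1 (link i) = 2^-1.
Proof. by move=> i_gt0; rewrite /xhat link_no_center. Qed.

Lemma wheel_cost_lower_bound (F : {set {set V}}) :
  F \subset wheelE m.+1 -> two_node_connected F ->
  (m.+1%:R - 2 : R) <= cost (@wheel_cost R m.+1) F.
Proof.
move=> sFE F2nc; set J := leaves :&: [set i | link i \in F].
have cardJ : (m - 1 <= #|J|)%N.
  have := cardsID [set i | link i \in F] leaves; rewrite -/J card_leaves.
  move=> cardL; rewrite -[X in (X - 1 <= _)%N]cardL leq_subLR addnC leq_add2r.
  exact: card_missing_links_le1.
have linksF : link @: J \subset F.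
  by apply/subsetP => e /imsetP [i]; rewrite !inE => /andP [_ iF] ->.
have cost_links : \sum_(e in link @: J) @wheel_cost R m.+1 e = #|J|%:R.
  rewrite -(card_in_imset (f := link)) -?sumr_const; last first.
    by move=> i j /setIP [iL _] /setIP [jL _]; apply: link_inj.
  by apply: eq_bigr => e /imsetP [i /setIP [+ _] ->]; rewrite inE; apply: wheel_cost_link.
rewrite /cost (big_setID (link @: J)) /= (setIidPr linksF) cost_links.
rewrite -[leLHS]addr0 lerD ?sumr_ge0 // => [|e _]; last exact: wheel_cost_ge0.
have -> : (m.+1%:R - 2 : R) = (m - 1)%N%:R by rewrite natrB; [rewrite -natr1; lra | lia].
by rewrite ler_nat.
Qed.

Lemma xhat_sum_ge (Q : pred {set V}) (s : seq {set V}) :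
  uniq s -> all (fun e => (e \in wheelE m.+1) && Q e) s ->
  \sum_(e <- s) @xhat R m.+1 e <= \sum_(e in wheelE m.+1 | Q e) @xhat R m.+1 e.
Proof. by move=> uniq_s sEQ; apply: sumr_le_uniq => // e _; exact: xhat_ge0. Qed.

Lemma xhat_bounds (e : {set V}) : 0 <= @xhat R m.+1 e <= 1.
Proof. by rewrite xhat_ge0 /xhat; case: ifP => //= _; rewrite invf_le1 //; lra. Qed.

Lemma xhat_cut (S : {set V}) : S != set0 -> S != setT ->
  2 <= \sum_(e in wheelE m.+1 | #|e :&: S| == 1%N) @xhat R m.+1 e.
Proof.
move=> S0 ST.
have [y y_sep] : exists y, (y \in S) != (ord0 \in S).
  have [r0S|r0S] := boolP (ord0 \in S).
    by have [_ [s _ sS]] := properP (etrans (properT S) ST); exists s; rewrite (negPf sS).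
  by have [s sS] := set0Pn _ S0; exists s; rewrite sS.
have y_gt0 : (0 < y)%N by apply: ord_gt0; apply: contraNneq y_sep => ->.
have [z /andP [zy z_sep] | no_other] :=
  pickP (fun z => (z != y) && ((z \in S) != (ord0 \in S))).
  have z_gt0 : (0 < z)%N by apply: ord_gt0; apply: contraNneq z_sep => ->.
  apply: le_trans (xhat_sum_ge (s := [:: spoke y; spoke z]) _ _).
  - by rewrite !big_cons big_nil !xhat_spoke addr0.
  - rewrite /= inE andbT; apply: contra_neq zy => /spoke_inj; rewrite !inE.
    by move=> /(_ y_gt0 z_gt0) ->.
  - by rewrite /= !spoke_wheelE // !card_pair_setI_eq1 // eq_sym.
have sideE z : z != y -> (z \in S) = (ord0 \in S).
  by move=> zy; have /negbT := no_other z; rewrite /= zy negbK => /eqP.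
have yp_gt0 := leaf_pred_gt0 y_gt0.
apply: le_trans (xhat_sum_ge (s := [:: spoke y; link y; link (leaf_pred y)]) _ _).
- by rewrite !big_cons big_nil xhat_spoke !xhat_link //; lra.
- rewrite /= !inE !negb_or !spoke_neq_link //= andbT.
  apply: contra_neq (leaf_pred_neq y_gt0) => /link_inj; rewrite !inE.
  by move=> /(_ y_gt0 yp_gt0).
- rewrite /= spoke_wheelE ?link_wheelE //= /link leaf_predK //.
  by rewrite !card_pair_setI_eq1 // ?(sideE (leaf_succ y)) ?(sideE (leaf_pred y))
    ?leaf_succ_neq ?leaf_pred_neq // eq_sym.
Qed.

Lemma xhat_node_cut (w : V) (S : {set V}) :
  S != set0 -> S \subset ~: [set w] -> S != ~: [set w] ->
  1 <= \sum_(e in wheelE m.+1 | (w \notin e) && (#|e :&: S| == 1%N)) @xhat R m.+1 e.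
Proof.
move=> S0 Sw Sneqw; have [t tS] := set0Pn _ S0.
have [_ [s sw sS]] := properP (etrans (properEneq _ _) (introT andP (conj Sneqw Sw))).
have tw : t \in ~: [set w] by apply: (subsetP Sw).
have [w0 | w_neq0] := eqVneq w ord0.
  move: sw tw; rewrite w0 !inE => /ord_gt0 s_gt0 /ord_gt0 t_gt0.
  have [u1 [u2 [u1_range u2_range u12 sep1 sep2]]] :=
    @cycle_two_changes (fun k => (inord k : V) \in S) t s
      (ltac:(have := ltn_ord t; lia)) (ltac:(have := ltn_ord s; lia))
      (ltac:(by rewrite /= !inord_val tS (negPf sS))).
  have ordK u : (1 <= u <= m)%N -> (inord u : V) = u :> nat.
    by move=> ?; rewrite inordK //; lia.
  have u1_gt0 : (0 < (inord u1 : V))%N by rewrite ordK //; lia.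
  have u2_gt0 : (0 < (inord u2 : V))%N by rewrite ordK //; lia.
  have succK u : (1 <= u <= m)%N -> leaf_succ (inord u) = inord (cycle_succ u).
    by move=> ?; rewrite /leaf_succ ordK.
  apply: le_trans (xhat_sum_ge (s := [:: link (inord u1); link (inord u2)]) _ _).
  - by rewrite !big_cons big_nil !xhat_link // addr0; lra.
  - rewrite /= inE andbT; apply: contra_neq u12 => /link_inj; rewrite !inE.
    by move=> /(_ u1_gt0 u2_gt0) /(congr1 (@nat_of_ord _)); rewrite !ordK.
  - by rewrite /= !link_wheelE ?center_notin_link // /link !succK // !card_pair_setI_eq1.
have [v [v_gt0 v_neqw v_sep]] :
    exists v : V, [/\ (0 < v)%N, v != w & (v \in S) != (ord0 \in S)].
  have [r0S | r0S] := boolP (ord0 \in S).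
    exists s; rewrite (negPf sS); split => //; last by move: sw; rewrite !inE.
    by apply: ord_gt0; apply: contraNneq sS => ->.
  exists t; rewrite tS; split => //; last by move: tw; rewrite !inE.
  by apply: ord_gt0; apply: contraNneq r0S => <-.
apply: le_trans (xhat_sum_ge (s := [:: spoke v]) _ _) => //.
  by rewrite big_seq1 xhat_spoke.
rewrite /= spoke_wheelE // !inE negb_or w_neq0 eq_sym v_neqw.
by rewrite card_pair_setI_eq1 // eq_sym.
Qed.

Lemma xhat_feasible : setpairs_feasible (wheelE m.+1) (@xhat R m.+1).
Proof.
by split=> [e _ | S | w S]; [exact: xhat_bounds | exact: xhat_cut | exact: xhat_node_cut].
Qed.

Lemma lp_cost_xhat : lp_cost (wheelE m.+1) (@wheel_cost R m.+1) (@xhat R m.+1) = m%:R / 2.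
Proof.
have linksE : link @: leaves \subset wheelE m.+1.
  by apply/subsetP => e /imsetP [i]; rewrite inE => i_gt0 ->; apply: link_wheelE.
rewrite /lp_cost (big_setID (link @: leaves)) /= (setIidPr linksE).
rewrite [X in _ + X]big1 ?addr0 => [|e /setDP [eE eL]]; last first.
  have [[i _ ->] | [i i_gt0 ei]] := wheelE_cases eE.
    by rewrite wheel_cost_spoke mul0r.
  by move: eL; rewrite ei imset_f // inE.
rewrite (eq_bigr (fun=> 2^-1)) => [|e /imsetP [i]]; last first.
  by rewrite inE => i_gt0 ->; rewrite wheel_cost_link // xhat_link // mul1r.
rewrite sumr_const card_in_imset ?card_leaves => [|i j iL jL]; last exact: link_inj.
by rewrite mulrC mulr_natr.
Qed.

End Wheel.

Theorem mainTheorem8 (R : realFieldType) (n : nat) (hn : (4 <= n)%N) :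
  [/\ (forall F : {set {set 'I_n}}, F \subset wheelE n -> two_node_connected F ->
         (n%:R - 2 : R) <= cost (@wheel_cost R n) F),
      setpairs_feasible (wheelE n) (@xhat R n),
      lp_cost (wheelE n) (@wheel_cost R n) (@xhat R n) = (n%:R - 1) / 2 &
      (exists x : {set 'I_n} -> R, setpairs_feasible (wheelE n) x /\
         forall F : {set {set 'I_n}}, F \subset wheelE n -> two_node_connected F ->
           (2 - 2 / (n%:R - 1)) * lp_cost (wheelE n) (@wheel_cost R n) x
             <= cost (@wheel_cost R n) F)].
Proof.
case: n hn => [// | m]; rewrite ltnS => m_ge3.
have lpE := lp_cost_xhat m_ge3 R.
have -> : (m.+1%:R - 1 : R) = m%:R by rewrite -natr1 addrK.
split; [exact: wheel_cost_lower_bound | exact: xhat_feasible | exact: lpE | ].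
exists (@xhat R m.+1); split => [|F sFE F2nc]; first exact: xhat_feasible.
have m_neq0 : (m%:R : R) != 0 by rewrite pnatr_eq0; lia.
rewrite lpE (_ : (2 - 2 / m%:R) * (m%:R / 2) = m.+1%:R - 2 :> R).
  exact: wheel_cost_lower_bound.
by rewrite -natr1; field.
Qed.
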